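(* Let $L\in K[D]$ with $\operatorname{Sym}_L=S_1\cdots S_k$ (homogeneous $S_i$), let $g\in K$ be invertible, and let $R$ be a common obstacle to factorization of $L$ of type $(S_1)\cdots(S_k)$. Then $g^{-1}\circ R\circ g$ is a common obstacle to factorization of type $(S_1)\cdots(S_k)$ of the gauge transformed operator $g^{-1}\circ L\circ g$.
   Context: $K$ is a field with commuting derivations $\partial_1,\dots,\partial_n$, and $K[D]=K[D_1,\dots,D_n]$ is the ring of linear differential operators over $K$: the $D_i$ commute with each other and $D_i\circ a=aD_i+\partial_i(a)$ for $a\in K$. Every $L\in K[D]$ is uniquely $\sum_{|J|\le d}a_JD^J$ with $a_J\in K$ and $D^J=D_1^{j_1}\cdots D_n^{j_n}$. The order $\operatorname{ord}(L)$ is the largest $|J|$ with $a_J\ne0$, and $\operatorname{ord}(0)=-\infty$. The symbol $\operatorname{Sym}_L=\sum_{|J|=\operatorname{ord}L}a_JX^J$; note that $\operatorname{Sym}_{g^{-1}\circ L\circ g}=\operatorname{Sym}_L$. A factorization of type $(S_1)\cdots(S_k)$ of an operator $M$ is $M=F_1\circ\cdots\circ F_k$ with $\operatorname{Sym}_{F_i}=S_i$. A common obstacle to factorization of $M$ of type $(S_1)\cdots(S_k)$ is an operator $R$ such that $M-R$ has a factorization of that type and $R$ has the minimal possible order among such operators. *)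

From mathcomp Require Import all_boot all_algebra.
From mathcomp Require Import mpoly.
Set Implicit Arguments. Unset Strict Implicit. Unset Printing Implicit Defensive.
Import GRing.Theory.
Local Open Scope ring_scope.

Definition commuting_derivations (K : fieldType) (n : nat)
  (der : 'I_n -> K -> K) : Prop :=
  [/\ (forall i a b, der i (a + b) = der i a + der i b),
      (forall i a b, der i (a * b) = a * der i b + der i a * b) &
      (forall i j a, der i (der j a) = der j (der i a))].

(* Linear differential operators: L = \sum_J a_J D^J is represented by the
   (normal-form) coefficient polynomial \sum_J a_J 'X_[J] in {mpoly K[n]};
   the additive structure is that of {mpoly K[n]}; composition is [dcomp]. *)
Section DiffOps.
Variables (K : fieldType) (n : nat) (der : 'I_n -> K -> K).

(* D_i \circ L : uses D_i \circ a = a D_i + der_i(a). *)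
Definition dDi (i : 'I_n) (L : {mpoly K[n]}) : {mpoly K[n]} :=
  'X_i * L + map_mpoly (der i) L.

Definition dDmon (m : 'X_{1..n}) (L : {mpoly K[n]}) : {mpoly K[n]} :=
  foldr (fun i acc => iter (m i) (dDi i) acc) L (enum 'I_n).

Definition dcomp (L M : {mpoly K[n]}) : {mpoly K[n]} :=
  \sum_(m <- msupp L) L@_m *: dDmon m M.

Definition dconst (a : K) : {mpoly K[n]} := a%:MP.

Definition gauge (g : K) (L : {mpoly K[n]}) : {mpoly K[n]} :=
  dcomp (dconst g^-1) (dcomp L (dconst g)).

(* order comparison: ord L <= ord M, with ord 0 = -oo.
   Since msize L = ord L + 1 for L != 0 and msize 0 = 0, this is msize. *)
Definition ord_le (L M : {mpoly K[n]}) : bool := (msize L <= msize M)%N.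

Definition dord (L : {mpoly K[n]}) : nat := (msize L).-1.

Definition dsym (L : {mpoly K[n]}) : {mpoly K[n]} :=
  \sum_(m <- msupp L | mdeg m == dord L) L@_m *: 'X_[m].

Definition has_fact_type (M : {mpoly K[n]}) (S : seq {mpoly K[n]}) : Prop :=
  exists Fs : seq {mpoly K[n]},
    [/\ size Fs = size S,
        (forall t, (t < size S)%N -> dsym (nth 0 Fs t) = nth 0 S t) &
        M = foldr dcomp 1 Fs].

Definition common_obstacle (M : {mpoly K[n]}) (S : seq {mpoly K[n]})
  (R : {mpoly K[n]}) : Prop :=
  has_fact_type (M - R) S /\
  (forall R', has_fact_type (M - R') S -> ord_le R R').

End DiffOps.

From mathcomp Require Import all_boot all_algebra.
From mathcomp Require Import mpoly.
Set Implicit Arguments. Unset Strict Implicit. Unset Printing Implicit Defensive.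
Import GRing.Theory.
Local Open Scope ring_scope.

(* The gauge transformation L |-> g^-1 o L o g is a ring automorphism of K[D]
   with inverse the gauge transformation by g^-1.  It only perturbs an operator
   by terms of lower order (D^J o g = g D^J + lower order terms), so it preserves
   the order and the symbol of every operator.  Hence it maps factorizations of
   type (S_1)...(S_k) of M - R to factorizations of the same type of the gauged
   operators, in both directions, and the minimality of ord R is transported. *)

Section GaugeTransformation.
Variables (K : fieldType) (n : nat) (der : 'I_n -> K -> K).
Hypothesis hder : commuting_derivations der.
Local Notation T := {mpoly K[n]}.
Local Notation dmap i := (map_mpoly (der i)).
Local Notation D := (dDi der).
Local Notation "L \oD M" := (dcomp der L M) (at level 40, left associativity).

Lemma derD i a b : der i (a + b) = der i a + der i b.
Proof. by case: hder. Qed.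

Lemma derM i a b : der i (a * b) = a * der i b + der i a * b.
Proof. by case: hder. Qed.

Lemma derC i j a : der i (der j a) = der j (der i a).
Proof. by case: hder. Qed.

Lemma der0 i : der i 0 = 0.
Proof. by apply/(addrI (der i 0)); rewrite -derD !addr0. Qed.

Lemma der1 i : der i 1 = 0.
Proof.
have h := derM i 1 1; rewrite !mul1r !mulr1 in h.
by apply/(addrI (der i 1)); rewrite addr0 -h.
Qed.

Lemma mcoeff_sumZX (s : seq 'X_{1..n}) (P : pred 'X_{1..n}) (F : 'X_{1..n} -> K) k :
  uniq s -> (\sum_(m <- s | P m) F m *: 'X_[m] : T)@_k =
            if (k \in s) && P k then F k else 0.
Proof.
move=> us; rewrite raddf_sum /=.
rewrite (eq_bigr (fun m => if m == k then F m else 0)); last first.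
  by move=> m _; rewrite mcoeffZ mcoeffX; case: eqP; rewrite ?mulr1 ?mulr0.
rewrite -big_mkcondr /= -big_filter.
case: ifP => [/andP[ks Pk]|knP].
  rewrite (@perm_big _ _ _ _ _ [:: k]) ?big_seq1 //.
  apply: uniq_perm => [||x]; rewrite ?filter_uniq //.
  by rewrite mem_filter mem_seq1; case: eqVneq => [->|]; rewrite ?ks ?Pk ?andbF.
rewrite big1_seq // => x; rewrite /= mem_filter => /andP[/andP[Px /eqP xk] xs].
by move: knP; rewrite -xk xs Px.
Qed.

Lemma map_mpolyE_sum (f : K -> K) (p : T) :
  map_mpoly f p = \sum_(m <- msupp p) f p@_m *: 'X_[m].
Proof.
by rewrite /map_mpoly /mmap; apply: eq_bigr => m _; rewrite mmap1_id mul_mpolyC.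
Qed.

Lemma mcoeff_dmap i (p : T) k : (dmap i p)@_k = der i p@_k.
Proof.
rewrite map_mpolyE_sum mcoeff_sumZX ?msupp_uniq // andbT.
by case: ifP => // /negbT/memN_msupp_eq0 ->; rewrite der0.
Qed.

Lemma dmapD i (p q : T) : dmap i (p + q) = dmap i p + dmap i q.
Proof. by apply/mpolyP => k; rewrite mcoeffD !mcoeff_dmap mcoeffD derD. Qed.

Lemma dmap0 i : dmap i (0 : T) = 0.
Proof. by apply/mpolyP => k; rewrite mcoeff0 mcoeff_dmap mcoeff0 der0. Qed.

Lemma dmapZ i a (p : T) : dmap i (a *: p) = a *: dmap i p + der i a *: p.
Proof. by apply/mpolyP => k; rewrite mcoeffD !mcoeffZ !mcoeff_dmap mcoeffZ derM. Qed.

Lemma dmapC i j (p : T) : dmap i (dmap j p) = dmap j (dmap i p).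
Proof. by apply/mpolyP => k; rewrite !mcoeff_dmap derC. Qed.

Lemma dmap_sum i (I : Type) (r : seq I) (F : I -> T) :
  dmap i (\sum_(x <- r) F x) = \sum_(x <- r) dmap i (F x).
Proof. exact: (big_morph _ (dmapD i) (dmap0 i)). Qed.

Lemma dmapX i m : dmap i ('X_[m] : T) = 0.
Proof.
by apply/mpolyP => k; rewrite mcoeff_dmap mcoeffX mcoeff0; case: eqP; rewrite ?der1 ?der0.
Qed.

Lemma dmapZX i c m : dmap i (c *: 'X_[m] : T) = der i c *: 'X_[m].
Proof. by rewrite dmapZ dmapX scaler0 add0r. Qed.

Lemma dmapXM i u (p : T) : dmap i ('X_[u] * p) = 'X_[u] * dmap i p.
Proof.
rewrite {1}[p]mpolyE mulr_sumr dmap_sum [in RHS]map_mpolyE_sum mulr_sumr.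
by apply: eq_bigr => m _; rewrite -!scalerAr -!mpolyXD dmapZX.
Qed.

Lemma msize_sum_le (I : eqType) (r : seq I) (F : I -> T) b :
  (forall x, x \in r -> msize (F x) <= b)%N -> (msize (\sum_(x <- r) F x) <= b)%N.
Proof.
move=> hF; rewrite big_seq; elim/big_ind: _ => //; first by rewrite msize0.
by move=> x y hx hy; rewrite (leq_trans (msizeD_le _ _)) // geq_max hx hy.
Qed.

Lemma msize_dmap i (p : T) : (msize (dmap i p) <= msize p)%N.
Proof.
rewrite map_mpolyE_sum; apply: msize_sum_le => m mp.
by rewrite (leq_trans (msizeZ_le _ _)) // msizeX msize_mdeg_lt.
Qed.

Lemma dDiD i (p q : T) : D i (p + q) = D i p + D i q.
Proof. by rewrite /dDi dmapD mulrDr addrACA. Qed.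

Lemma dDi0 i : D i 0 = 0.
Proof. by rewrite /dDi dmap0 mulr0 addr0. Qed.

Lemma dDiZ i a (p : T) : D i (a *: p) = a *: D i p + der i a *: p.
Proof. by rewrite /dDi dmapZ scalerDr scalerAr addrA. Qed.

Lemma dDiC i j (p : T) : D i (D j p) = D j (D i p).
Proof.
rewrite /dDi !dmapD !dmapXM !mulrDr dmapC !mulrA (mulrC 'X_i 'X_j).
exact: addrACA.
Qed.

Lemma iter_dDiC k1 k2 i j (p : T) :
  iter k1 (D j) (iter k2 (D i) p) = iter k2 (D i) (iter k1 (D j) p).
Proof.
have iterC k (q : T) : D j (iter k (D i) q) = iter k (D i) (D j q).
  by elim: k => //= k IH; rewrite dDiC IH.
by elim: k1 => //= k1 ->; rewrite iterC.
Qed.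

(* [dDmon] along an arbitrary list of indices instead of [enum 'I_n], so that
   it can be reasoned about by induction on the list. *)
Definition dDseq (l : seq 'I_n) (m : 'X_{1..n}) (p : T) : T :=
  foldr (fun i acc => iter (m i) (D i) acc) p l.

Lemma dDseq_iter l m k j (p : T) :
  dDseq l m (iter k (D j) p) = iter k (D j) (dDseq l m p).
Proof. by elim: l => //= i l ->; rewrite iter_dDiC. Qed.

Lemma dDseq_add l m1 m2 (p : T) : dDseq l (m1 + m2)%MM p = dDseq l m1 (dDseq l m2 p).
Proof. by elim: l => //= i l IH; rewrite mnmDE iterD IH dDseq_iter. Qed.

Lemma dDseq_ind (Q : 'X_{1..n} -> T -> Prop) :
  (forall i m0 p, Q m0 p -> Q (U_(i) + m0)%MM (D i p)) ->
  forall l (m : 'X_{1..n}) m0 p, Q m0 p -> Q (m0 + \sum_(i <- l) U_(i) *+ m i)%MM (dDseq l m p).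
Proof.
move=> QD; elim=> [|i l IH] m m0 p Qp /=; first by rewrite big_nil addm0.
rewrite big_cons addmA [(m0 + _)%MM]addmC -addmA.
move: (IH m m0 p Qp); move: (m0 + _)%MM (dDseq l m p) => m1 p1.
elim: (m i) => [|k IHk] Q1 /=; first by rewrite mulm0n add0m.
by rewrite mulmS -addmA; apply/QD/IHk.
Qed.

Lemma dDmon_ind (Q : 'X_{1..n} -> T -> Prop) :
  (forall i m0 p, Q m0 p -> Q (U_(i) + m0)%MM (D i p)) ->
  forall m m0 p, Q m0 p -> Q (m0 + m)%MM (dDmon der m p).
Proof.
move=> QD m m0 p Qp; rewrite {1}[m]multinomUE_id.
by have := dDseq_ind QD (enum 'I_n) m Qp; rewrite big_enum.
Qed.

Lemma dDmon_add m1 m2 (p : T) :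
  dDmon der (m1 + m2)%MM p = dDmon der m1 (dDmon der m2 p).
Proof. exact: dDseq_add. Qed.

Lemma dDmonU j (p : T) : dDmon der U_(j)%MM p = D j p.
Proof.
have dDseqU l : dDseq l U_(j)%MM p = iter (count (pred1 j) l) (D j) p.
  by elim: l => //= i l ->; rewrite mnm1E; case: eqVneq => [->|].
by rewrite /dDmon -/(dDseq _ _ _) dDseqU (@count_uniq_mem _ _ j) ?enum_uniq ?mem_enum.
Qed.

Lemma dDmon0 (p : T) : dDmon der 0%MM p = p.
Proof. by rewrite /dDmon; elim: (enum 'I_n) => //= i l ->; rewrite mnm0E. Qed.

Lemma dDmon1 m : dDmon der m (1 : T) = 'X_[m].
Proof.
have := @dDmon_ind (fun m p => p = 'X_[m]) _ m 0%MM 1.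
rewrite add0m; apply; last by rewrite mpolyX0.
by move=> i m0 p ->; rewrite /dDi dmapX addr0 mpolyXD.
Qed.

Lemma msize_dDmonC_sub c m :
  (msize (dDmon der m (c%:MP : T) - c *: 'X_[m]) <= mdeg m)%N.
Proof.
have := @dDmon_ind (fun m p => msize (p - c *: 'X_[m]) <= mdeg m)%N _ m 0%MM c%:MP.
rewrite add0m; apply => [i m0 p|]; last first.
  by rewrite mpolyX0 -mul_mpolyC mulr1 subrr msize0.
set E := p - c *: 'X_[m0]; have -> : p = c *: 'X_[m0] + E by rewrite addrC subrK.
move=> hE; rewrite dDiD dDiZ {1}/dDi dmapX addr0 -mpolyXD mdegD mdeg1 add1n.
rewrite addrC addrA addKr [D i E]/dDi.
apply: (leq_trans (msizeD_le _ _)); rewrite geq_max (leq_trans (msizeZ_le _ _)) ?msizeX //=.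
apply: (leq_trans (msizeD_le _ _)); rewrite geq_max (leqW (leq_trans (msize_dmap _ _) hE)) andbT.
have [->|En0] := eqVneq E 0; first by rewrite mulr0 msize0.
by rewrite msizeM ?msizeX ?mdeg1 // -msize_poly_eq0 msizeX.
Qed.

Lemma dcomp_supp (p N : T) (s : seq 'X_{1..n}) : uniq s -> {subset msupp p <= s} ->
  p \oD N = \sum_(m <- s) p@_m *: dDmon der m N.
Proof.
move=> us sub; rewrite /dcomp [in RHS](bigID (mem (msupp p))) /=.
rewrite [X in _ = _ + X]big1 ?addr0 => [|m /memN_msupp_eq0 ->]; last exact: scale0r.
rewrite -[in RHS]big_filter; apply/perm_big/uniq_perm; rewrite ?msupp_uniq ?filter_uniq //.
by move=> x; rewrite mem_filter; case: (boolP (x \in msupp p)) => // /sub ->.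
Qed.

Lemma dcompD (p q N : T) : (p + q) \oD N = p \oD N + q \oD N.
Proof.
pose s := undup (msupp p ++ msupp q).
have us : uniq s by apply: undup_uniq.
rewrite (@dcomp_supp (p + q) N s) => [||x /msuppD_le]; rewrite ?mem_undup //.
rewrite (@dcomp_supp p N s) => [||x xp]; rewrite ?mem_undup ?mem_cat ?xp //.
rewrite (@dcomp_supp q N s) => [||x xq]; rewrite ?mem_undup ?mem_cat ?xq ?orbT //.
by rewrite -big_split; apply: eq_bigr => m _; rewrite mcoeffD scalerDl.
Qed.

Lemma dcompZ a (p N : T) : (a *: p) \oD N = a *: (p \oD N).
Proof.
rewrite (@dcomp_supp (a *: p) N (msupp p)) ?msupp_uniq //; last exact: msuppZ_le.
by rewrite /dcomp scaler_sumr; apply: eq_bigr => m _; rewrite mcoeffZ scalerA.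
Qed.

Lemma dcomp0 (N : T) : 0 \oD N = 0.
Proof. by have := dcompZ 0 0 N; rewrite !scale0r. Qed.

Lemma dcompB (p q N : T) : (p - q) \oD N = p \oD N - q \oD N.
Proof. by rewrite dcompD -scaleN1r dcompZ scaleN1r. Qed.

Lemma dcomp_sum (I : Type) (r : seq I) (G : I -> T) N :
  (\sum_(x <- r) G x) \oD N = \sum_(x <- r) G x \oD N.
Proof. exact: (big_morph (dcomp der ^~ N) (fun p q => dcompD p q N) (dcomp0 N)). Qed.

Lemma dcompZX c m (N : T) : (c *: 'X_[m]) \oD N = c *: dDmon der m N.
Proof. by rewrite dcompZ /dcomp msuppX big_seq1 mcoeffX eqxx scale1r. Qed.

Lemma dcompC c (N : T) : c%:MP \oD N = c *: N.
Proof. by rewrite -[c%:MP]mulr1 -mpolyX0 mul_mpolyC dcompZX dDmon0. Qed.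

Lemma dcomp1 (L : T) : L \oD 1 = L.
Proof. by rewrite /dcomp [in RHS](mpolyE L); apply: eq_bigr => m _; rewrite dDmon1. Qed.

Lemma dcomp_dDi i (M N : T) : D i M \oD N = D i (M \oD N).
Proof.
rewrite {1}/dDi dcompD {1}[M]mpolyE mulr_sumr dcomp_sum map_mpolyE_sum dcomp_sum.
rewrite [in RHS]/dcomp (big_morph (D i) (dDiD i) (dDi0 i)) -big_split /=.
apply: eq_bigr => m _.
by rewrite -scalerAr -mpolyXD !dcompZX dDmon_add dDmonU dDiZ.
Qed.

Lemma dcomp_dDseq l m (M N : T) : dDseq l m M \oD N = dDseq l m (M \oD N).
Proof.
have dcomp_iter k i (P : T) : iter k (D i) P \oD N = iter k (D i) (P \oD N).
  by elim: k => //= k IH; rewrite dcomp_dDi IH.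
by elim: l => //= i l IH; rewrite dcomp_iter IH.
Qed.

Lemma dcompA (L M N : T) : (L \oD M) \oD N = L \oD (M \oD N).
Proof.
rewrite {1}[L \oD M]/dcomp dcomp_sum [in RHS]/dcomp; apply: eq_bigr => m _.
by rewrite dcompZ dcomp_dDseq.
Qed.

Lemma gaugeE g (L : T) : gauge der g L = g^-1 *: (L \oD g%:MP).
Proof. by rewrite /gauge /dconst dcompC. Qed.

Lemma gaugeB g (A B : T) : gauge der g (A - B) = gauge der g A - gauge der g B.
Proof. by rewrite !gaugeE dcompB scalerBr. Qed.

Lemma gaugeM g (A B : T) : g != 0 ->
  gauge der g (A \oD B) = gauge der g A \oD gauge der g B.
Proof.
move=> gn0; rewrite !gaugeE dcompZ [in RHS]dcompA dcompC scalerA divff //.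
by rewrite scale1r dcompA.
Qed.

Lemma gauge1 g : g != 0 -> gauge der g (1 : T) = 1.
Proof.
by move=> gn0; rewrite gaugeE -mpolyC1 dcompC scale1r -mul_mpolyC -mpolyCM mulVf.
Qed.

Lemma gaugeK g : g != 0 -> cancel (gauge der g) (gauge der g^-1).
Proof.
move=> gn0 L; rewrite !gaugeE invrK dcompZ dcompA dcompC scalerA divff // scale1r.
by rewrite -mul_mpolyC -mpolyCM mulfV // mpolyC1 dcomp1.
Qed.

Lemma gauge_foldr g (Fs : seq T) : g != 0 ->
  gauge der g (foldr (dcomp der) 1 Fs) = foldr (dcomp der) 1 (map (gauge der g) Fs).
Proof. by move=> gn0; elim: Fs => [|A Fs IH] /=; rewrite ?gauge1 // gaugeM // IH. Qed.

Lemma msize_gauge_sub g (L : T) : g != 0 ->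
  (msize (gauge der g L - L) <= (msize L).-1)%N.
Proof.
move=> gn0.
have -> : gauge der g L - L =
    g^-1 *: \sum_(m <- msupp L) L@_m *: (dDmon der m g%:MP - g *: 'X_[m]).
  rewrite gaugeE -{2}[L]scale1r -(mulVf gn0) -scalerA -scalerBr; congr (_ *: _).
  rewrite /dcomp {3}[L]mpolyE scaler_sumr -sumrB; apply: eq_bigr => m _.
  by rewrite scalerBr scalerA mulrC -scalerA.
apply: (leq_trans (msizeZ_le _ _)); apply: msize_sum_le => m mL.
apply: (leq_trans (msizeZ_le _ _)); apply: (leq_trans (msize_dDmonC_sub _ _)).
by rewrite -ltnS (ltn_predK (msize_mdeg_lt mL)) msize_mdeg_lt.
Qed.

Lemma mcoeff_dsym (P : T) k : (dsym P)@_k = if mdeg k == dord P then P@_k else 0.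
Proof.
rewrite /dsym mcoeff_sumZX ?msupp_uniq //.
by case: (boolP (k \in msupp P)) => //= /memN_msupp_eq0 ->; case: ifP.
Qed.

Lemma msize_dsym_addl (L E : T) : (msize E <= (msize L).-1)%N ->
  msize (L + E) = msize L /\ dsym (L + E) = dsym L.
Proof.
move=> hE; have [L0|Ln0] := eqVneq L 0.
  by move: hE; rewrite L0 msize0 leqn0 msize_poly_eq0 => /eqP ->; rewrite addr0 msize0.
have hl := mlead_deg Ln0.
have Eoff k : ((msize L).-1 <= mdeg k)%N -> E@_k = 0.
  by move=> hk; apply/memN_msupp_eq0/msize_mdeg_ge/(leq_trans hE).
have hs : msize (L + E) = msize L.
  apply/eqP; rewrite eqn_leq; apply/andP; split.
    rewrite (leq_trans (msizeD_le _ _)) // geq_max leqnn.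
    exact: leq_trans hE (leq_pred _).
  rewrite -hl; apply: msize_mdeg_lt; rewrite mcoeff_msupp mcoeffD Eoff -?hl //.
  by rewrite addr0 -mcoeff_msupp mlead_supp.
split=> //; apply/mpolyP => k; rewrite !mcoeff_dsym /dord hs mcoeffD.
by case: eqP => // hk; rewrite Eoff ?addr0 // hk.
Qed.

Lemma msize_dsym_gauge g (L : T) : g != 0 ->
  msize (gauge der g L) = msize L /\ dsym (gauge der g L) = dsym L.
Proof. by move=> gn0; have := msize_dsym_addl (msize_gauge_sub L gn0); rewrite addrC subrK. Qed.

Lemma has_fact_type_gauge g (M : T) S : g != 0 ->
  has_fact_type der M S -> has_fact_type der (gauge der g M) S.
Proof.
move=> gn0 [Fs [hsz hsym ->]]; exists (map (gauge der g) Fs); split.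
- by rewrite size_map.
- move=> t ht; rewrite (nth_map 0) ?hsz //.
  by have [_ ->] := msize_dsym_gauge (nth 0 Fs t) gn0; apply: hsym.
- by rewrite gauge_foldr.
Qed.

End GaugeTransformation.

Theorem mainTheorem8 (K : fieldType) (n : nat) (der : 'I_n -> K -> K)
  (hder : commuting_derivations der)
  (L : {mpoly K[n]}) (S : seq {mpoly K[n]})
  (hS : forall s, s \in S -> s \is homog mdeg)
  (hsym : dsym L = \prod_(s <- S) s)
  (g : K) (hg : g != 0)
  (R : {mpoly K[n]}) (hR : common_obstacle der L S R) :
  common_obstacle der (gauge der g L) S (gauge der g R).
Proof.
have hg' : g^-1 != 0 by rewrite invr_eq0.
case: hR => hLR hmin; split; first by rewrite -gaugeB; apply: has_fact_type_gauge.
move=> R' hLR'; rewrite /ord_le.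
have [-> _] := msize_dsym_gauge hder R hg.
have [<- _] := msize_dsym_gauge hder R' hg'.
apply: hmin; rewrite -(gaugeK hder hg L) -gaugeB.
exact: has_fact_type_gauge.
Qed.
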